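(* Let $\epsilon\in\,]0,1[$. The mapping $K\mapsto \mathcal{P}^-(K,\epsilon)$ induces a functor from the category $\square^{op}\mathbf{Set}$ of precubical sets to the category ${\mathbf{Top}}$ of topological spaces.
   Context: ${\mathbf{Top}}$ denotes the category of $\Delta$-generated spaces (or of $\Delta$-Hausdorff $\Delta$-generated spaces), with internal hom $\mathbf{TOP}(-,-)$ (the $\Delta$-kelleyfication of the compact-open topology). $\square$ is the box category (objects $[n]=\{0,1\}^n$, $n\geqslant 0$, generated by the coface maps $\delta_i^\alpha$) and $\square^{op}\mathbf{Set}$ is the category of precubical sets (presheaves over $\square$). For a precubical set $K$, $|K|_{geom}=\int^{[n]\in\square}K_n.[0,1]^n$ is its geometric realization, and each $n$-cube $c$ induces a map $|c|_{geom}:[0,1]^n\to |K|_{geom}$. The initial vertex of an $n$-cube $c$ is $c^-=\partial_1^0\cdots\partial_n^0c$, and for $\alpha\in K_0$, $\mathcal{C}^-_\alpha(K)=\{c\in K\mid \dim(c)\geqslant 1,\ c^-=\alpha\}$. Let $0_n=(0,\dots,0)$. For $n\geqslant 1$ and $0<\epsilon<1$, $N_n(\epsilon)$ is the set of natural directed paths $\phi=(\phi_1,\dots,\phi_n):[0,\epsilon]\to[0,1]^n$ (continuous, non-decreasing in each coordinate, with $\phi_1(t)+\dots+\phi_n(t)=t$ for all $t$, so that $\phi(0)=0_n$), equipped with the $\Delta$-kelleyfication of the relative topology from $\mathbf{TOP}([0,\epsilon],[0,1]^n)$. The homotopy branching space is $\mathcal{P}^-(K,\epsilon)=\coprod_{\alpha\in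 K_0}\mathcal{P}^-_\alpha(K,\epsilon)$, where $\mathcal{P}^-_\alpha(K,\epsilon)=\{|c|_{geom}\phi\mid c\in\mathcal{C}^-_\alpha(K),\ \phi\in N_{\dim(c)}(\epsilon)\}$ carries the $\Delta$-kelleyfication of the relative topology from $\mathbf{TOP}([0,\epsilon],|K|_{geom})$. *)

From HB Require Import structures.
From mathcomp Require Import all_boot all_order all_algebra.
From mathcomp Require Import boolp reals.
Set Implicit Arguments. Unset Strict Implicit. Unset Printing Implicit Defensive.
Import Order.TTheory GRing.Theory Num.Theory.
Local Open Scope ring_scope.

Definition opens (X : Type) := (X -> Prop) -> Prop.

Definition is_topology (X : Type) (T : opens X) : Prop :=
  T (fun _ => True) /\
  (forall U V, T U -> T V -> T (fun x => U x /\ V x)) /\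
  (forall (I : Type) (F : I -> X -> Prop),
      (forall i, T (F i)) -> T (fun x => exists i, F i x)).

Definition generated_top (X : Type) (S : opens X) : opens X :=
  fun U => forall T : opens X, is_topology T -> (forall V, S V -> T V) -> T U.

Definition cont (X Y : Type) (TX : opens X) (TY : opens Y) (f : X -> Y) : Prop :=
  forall V, TY V -> TX (fun x => V (f x)).

Definition sub_top (X : Type) (P : X -> Prop) (T : opens X) : opens {x | P x} :=
  fun U => exists V, T V /\ forall x : {x | P x}, U x <-> V (proj1_sig x).

Definition compact (X : Type) (T : opens X) (C : X -> Prop) : Prop :=
  forall (I : Type) (F : I -> X -> Prop),
    (forall i, T (F i)) -> (forall x, C x -> exists i, F i x) ->
    exists (m : nat) (s : 'I_m -> I), forall x, C x -> exists k, F (s k) x.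

Section RealSpaces.
Variable R : realType.

Definition open_R : opens R :=
  fun V => forall x, V x -> exists e : R, 0 < e /\ forall y, `|y - x| < e -> V y.

Definition open_Rn (n : nat) : opens ('I_n -> R) :=
  fun V => forall x, V x -> exists e : R, 0 < e /\
     forall y, (forall i, `|y i - x i| < e) -> V y.

Definition cube (n : nat) := {t : 'I_n -> R | [forall i, (0 <= t i <= 1)]}.
Definition cube_top (n : nat) : opens (cube n) :=
  sub_top (P := fun t : 'I_n -> R => is_true [forall i, (0 <= t i <= 1)]) (@open_Rn n).

Definition simplex (n : nat) :=
  {x : 'I_n.+1 -> R | [forall i, 0 <= x i] && (\sum_(i < n.+1) x i == 1)}.
Definition simplex_top (n : nat) : opens (simplex n) :=
  sub_top (P := fun x : 'I_n.+1 -> R =>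
             is_true ([forall i, 0 <= x i] && (\sum_(i < n.+1) x i == 1)))
          (@open_Rn n.+1).

Definition kelley (X : Type) (T : opens X) : opens X :=
  fun U => forall (n : nat) (phi : simplex n -> X),
    cont (@simplex_top n) T phi -> simplex_top (fun s => U (phi s)).

Definition seg (eps : R) := {t : R | 0 <= t <= eps}.
Definition seg_top (eps : R) : opens (seg eps) :=
  sub_top (P := fun t : R => is_true (0 <= t <= eps)) open_R.

Definition cofacef (n : nat) (i : 'I_n.+1) (a : bool) (t : 'I_n -> R)
  : 'I_n.+1 -> R :=
  fun k => match unlift i k with None => (nat_of_bool a)%:R | Some k' => t k' end.

Lemma cofacef_in (n : nat) (i : 'I_n.+1) (a : bool) (t : cube n) :
  [forall k, (0 <= cofacef i a (proj1_sig t) k <= 1)].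
Proof.
apply/forallP => k; rewrite /cofacef; case: (unlift i k) => [k'|].
  exact: (forallP (proj2_sig t) k').
by case: a => /=; rewrite ?lexx ?ler01.
Qed.

Definition coface (n : nat) (i : 'I_n.+1) (a : bool) (t : cube n) : cube n.+1 :=
  exist _ (cofacef i a (proj1_sig t)) (cofacef_in i a t).

End RealSpaces.

(* Precubical sets (presheaves on the box category, presented by the   *)
(* face maps partial_i^a = K(delta_i^a) and the cubical identities)    *)
(* Indices are 0-based: pc_face i a : K (n+1) -> K n is partial_{i+1}^a *)

Record precubical := PreCubical {
  pc_cell :> nat -> Type;
  pc_face : forall n : nat, 'I_n.+1 -> bool -> pc_cell n.+1 -> pc_cell n;
  pc_cubical : forall (n i j : nat) (a b : bool) (x : pc_cell n.+2),
    (i < j)%N -> (j <= n.+1)%N ->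
    @pc_face n (inord i) a (@pc_face n.+1 (inord j) b x)
    = @pc_face n (inord j.-1) b (@pc_face n.+1 (inord i) a x) }.
Arguments pc_face {p n}.

Record pc_hom (K L : precubical) := PcHom {
  pc_map :> forall n : nat, K n -> L n;
  pc_map_face : forall (n : nat) (i : 'I_n.+1) (a : bool) (x : K n.+1),
    @pc_map n (pc_face i a x) = pc_face i a (@pc_map n.+1 x) }.

Arguments pc_map {K L} p n.

Definition pc_id (K : precubical) : pc_hom K K :=
  @PcHom K K (fun n x => x) (fun n i a x => erefl).

Definition pc_comp (K L M : precubical) (g : pc_hom L M) (f : pc_hom K L)
  : pc_hom K M :=
  @PcHom K M (fun n x => g n (f n x))
    (fun n i a x => etrans (f_equal (g n) (pc_map_face f i a x))
                           (pc_map_face g i a (f n.+1 x))).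

Fixpoint init (K : precubical) (n : nat) : K n -> K 0%N :=
  match n return K n -> K 0%N with
  | 0%N => fun c => c
  | m.+1 => fun c => @init K m (pc_face (@ord_max m) false c)
  end.

Section Realization.
Variable R : realType.
Variable K : precubical.

Definition cellpt := {n : nat & (K n * cube R n)%type}.

Inductive greq : cellpt -> cellpt -> Prop :=
| greq_refl p : greq p p
| greq_sym p q : greq p q -> greq q p
| greq_trans p q r : greq p q -> greq q r -> greq p r
| greq_gen (n : nat) (i : 'I_n.+1) (a : bool) (x : K n.+1) (t : cube R n) :
    greq (existT _ n (pc_face i a x, t)) (existT _ n.+1 (x, coface i a t)).

Definition gr := {A : cellpt -> Prop | exists p, A = greq p}.

Definition grp (p : cellpt) : gr := exist _ (greq p) (ex_intro _ p erefl).

Definition geom (n : nat) (c : K n) : cube R n -> gr :=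
  fun t => grp (existT _ n (c, t)).

(** Topology of |K|_geom: final topology w.r.t. all the |c|_geom
    (the colimit topology; it is Delta-generated). *)
Definition gr_top : opens gr :=
  fun U => forall (n : nat) (c : K n), cube_top (fun t => U (geom c t)).

Definition gr_rep (A : gr) : cellpt := projT1 (cid (proj2_sig A)).

End Realization.

Arguments gr : clear implicits.

Definition gr_map (R : realType) (K L : precubical) (f : pc_hom K L)
  (A : gr R K) : gr R L :=
  let p := gr_rep A in
  grp (existT _ (projT1 p) (f (projT1 p) (projT2 p).1, (projT2 p).2)).

Section Branching.
Variable R : realType.
Variable K : precubical.
Variable eps : R.

Definition C0 := {g : seg eps -> gr R K | cont (@seg_top R eps) (gr_top (K:=K)) g}.

Definition co_sub : opens C0 :=
  fun W => exists (C : seg eps -> Prop) (U : gr R K -> Prop),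
    compact (@seg_top R eps) C /\ gr_top U /\
    forall g : C0, W g <-> (forall s, C s -> U (proj1_sig g s)).

Definition TOP_top : opens C0 := @kelley R _ (generated_top co_sub).

Definition natdir (n : nat) (phi : seg eps -> cube R n) : Prop :=
  cont (@seg_top R eps) (@cube_top R n) phi /\
  (forall s t : seg eps, proj1_sig s <= proj1_sig t ->
     forall i, proj1_sig (phi s) i <= proj1_sig (phi t) i) /\
  (forall t : seg eps, \sum_(i < n) proj1_sig (phi t) i = proj1_sig t).

Definition Pm_pred (alpha : K 0%N) (g : C0) : Prop :=
  exists (n : nat) (c : K n), (0 < n)%N /\ init c = alpha /\
    exists phi : seg eps -> cube R n, natdir phi /\
      forall t, proj1_sig g t = geom c (phi t).

Definition Pma (alpha : K 0%N) := {g : C0 | Pm_pred alpha g}.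

Definition Pma_top (alpha : K 0%N) : opens (Pma alpha) :=
  @kelley R _ (sub_top (P := Pm_pred alpha) TOP_top).

Definition Pm := {alpha : K 0%N & Pma alpha}.

Definition Pm_top : opens Pm :=
  fun U => forall alpha : K 0%N, Pma_top (fun x => U (existT _ alpha x)).

End Branching.

Arguments Pm {R} K eps.
Arguments Pm_top {R} K eps.

From HB Require Import structures.
From mathcomp Require Import all_boot all_order all_algebra.
From mathcomp Require Import boolp reals.
Import Order.TTheory GRing.Theory Num.Theory.
Local Open Scope ring_scope.
Set Implicit Arguments. Unset Strict Implicit.

(* A morphism f : K -> L sends a cell point (c, t) to (f c, t); this respects
   the face relations, so it descends to |f|_geom, which is functorial and
   continuous because it maps each characteristic map |c|_geom to |f c|_geom.
   Postcomposition with |f|_geom is then continuous for the compact-open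
   topology, preserves the Delta-kelleyfication, and sends a natural directed
   path in a cube c with initial vertex alpha to one in f c with initial
   vertex f_0 alpha. *)

Lemma generated_topology (X : Type) (S : opens X) : is_topology (generated_top S).
Proof.
split; [|split].
- by move=> T [TT _] _.
- move=> U V HU HV T hT hS.
  exact: (proj1 (proj2 hT)) _ _ (HU T hT hS) (HV T hT hS).
- by move=> I F HF T hT hS; apply: (proj2 (proj2 hT)) => i; apply: HF.
Qed.

Lemma generated_top_sub (X : Type) (S : opens X) U : S U -> generated_top S U.
Proof. by move=> SU T _; apply. Qed.

Lemma cont_generated (X Y : Type) (S1 : opens X) (S2 : opens Y) (h : X -> Y) :
  (forall V, S2 V -> generated_top S1 (fun x => V (h x))) ->
  cont (generated_top S1) (generated_top S2) h.
Proof.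
move=> HS U HU; apply: (HU (fun V => generated_top S1 (fun x => V (h x)))) => //.
have [topT [topI topU]] := generated_topology S1.
split; [exact: topT | split]; first by move=> ? ?; apply: topI.
by move=> I F; apply: topU.
Qed.

Lemma cont_sub_top (X Y : Type) (P : X -> Prop) (Q : Y -> Prop)
    (TX : opens X) (TY : opens Y) (h0 : X -> Y) (h : {x | P x} -> {y | Q y}) :
  (forall x, proj1_sig (h x) = h0 (proj1_sig x)) ->
  cont TX TY h0 -> cont (sub_top TX) (sub_top TY) h.
Proof.
move=> hE h0_cont U [V [TV UV]].
exists (fun x => V (h0 x)); split; first exact: h0_cont.
by move=> x; rewrite UV hE.
Qed.

Lemma cont_kelley (R : realType) (X Y : Type) (TX : opens X) (TY : opens Y)
    (h : X -> Y) :
  cont TX TY h -> cont (@kelley R X TX) (@kelley R Y TY) h.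
Proof.
move=> h_cont U HU n phi phi_cont.
exact: (HU n (fun s => h (phi s)) (fun V TV => phi_cont _ (h_cont V TV))).
Qed.

Lemma init_pc_map (K L : precubical) (f : pc_hom K L) n (c : K n) :
  init (f n c) = f 0%N (init c).
Proof. by elim: n c => [|n IHn] c //=; rewrite -pc_map_face IHn. Qed.

Section RealizationMap.
Variable R : realType.

Definition cellpt_map (K L : precubical) (f : pc_hom K L) (p : cellpt R K)
    : cellpt R L :=
  existT _ (projT1 p) (f (projT1 p) (projT2 p).1, (projT2 p).2).

Lemma greq_cellpt_map (K L : precubical) (f : pc_hom K L) p q :
  greq p q -> greq (cellpt_map f p) (cellpt_map f q).
Proof.
elim=> {p q} [p | p q _ | p q r _ pq _ qr | n i a x t].
- exact: greq_refl.
- exact: greq_sym.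
- exact: greq_trans pq qr.
- by rewrite /cellpt_map /= pc_map_face; apply: greq_gen.
Qed.

Lemma gr_eq (K : precubical) (A B : gr R K) : proj1_sig A = proj1_sig B -> A = B.
Proof. by case: A B => [a Ha] [b Hb] /=; apply: eq_exist. Qed.

Lemma grp_greq (K : precubical) (p q : cellpt R K) : greq p q -> grp p = grp q.
Proof.
move=> pq; apply: gr_eq; apply: funext => r; apply: propext.
by split; [apply: greq_trans (greq_sym pq) | apply: greq_trans pq].
Qed.

Lemma gr_repP (K : precubical) (A : gr R K) : proj1_sig A = greq (gr_rep A).
Proof. by rewrite /gr_rep; case: cid. Qed.

Lemma gr_repK (K : precubical) (A : gr R K) : grp (gr_rep A) = A.
Proof. by apply: gr_eq; rewrite [RHS]gr_repP. Qed.

Lemma gr_map_grp (K L : precubical) (f : pc_hom K L) (p : cellpt R K) :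
  gr_map f (grp p) = grp (cellpt_map f p).
Proof.
apply: grp_greq; apply: greq_cellpt_map.
have /= rep_p := gr_repP (grp p).
by rewrite -rep_p; apply: greq_refl.
Qed.

Lemma gr_map_geom (K L : precubical) (f : pc_hom K L) n (c : K n) (t : cube R n) :
  gr_map f (geom c t) = geom (f n c) t.
Proof. exact: gr_map_grp. Qed.

Lemma gr_map_id (K : precubical) (A : gr R K) : gr_map (pc_id K) A = A.
Proof. by rewrite -(gr_repK A) gr_map_grp; case: (gr_rep A) => n [c t]. Qed.

Lemma gr_map_comp (K L M : precubical) (f : pc_hom K L) (g : pc_hom L M)
    (A : gr R K) :
  gr_map (pc_comp g f) A = gr_map g (gr_map f A).
Proof. by rewrite -(gr_repK A) !gr_map_grp. Qed.

Lemma gr_map_cont (K L : precubical) (f : pc_hom K L) :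
  cont (@gr_top R K) (@gr_top R L) (gr_map f).
Proof.
move=> U TU n c.
have -> : (fun t => U (gr_map f (geom c t))) = (fun t => U (geom (f n c) t)).
  by apply: funext => t; rewrite gr_map_geom.
exact: TU.
Qed.

End RealizationMap.

Section BranchingMap.
Variables (R : realType) (eps : R).

Definition C0_map (K L : precubical) (f : pc_hom K L) (g : C0 K eps) : C0 L eps :=
  exist (cont (@seg_top R eps) (@gr_top R L)) (fun s => gr_map f (proj1_sig g s))
    (fun V TV => proj2_sig g _ (gr_map_cont f TV)).

Lemma C0_map_cont (K L : precubical) (f : pc_hom K L) :
  cont (@TOP_top R K eps) (@TOP_top R L eps) (C0_map f).
Proof.
apply: cont_kelley; apply: cont_generated => W [C [U [cpt_C [TU WE]]]].
apply: generated_top_sub; exists C, (fun A => U (gr_map f A)).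
split; first exact: cpt_C.
split; first exact: gr_map_cont.
by move=> g; rewrite WE.
Qed.

Lemma Pm_pred_map (K L : precubical) (f : pc_hom K L) alpha (g : C0 K eps) :
  Pm_pred alpha g -> Pm_pred (f 0%N alpha) (C0_map f g).
Proof.
move=> [n [c [n_gt0 [init_c [phi [natdir_phi gE]]]]]].
exists n, (f n c); split; first exact: n_gt0.
split; first by rewrite init_pc_map init_c.
by exists phi; split=> // t /=; rewrite gE gr_map_geom.
Qed.

Definition Pma_map (K L : precubical) (f : pc_hom K L) alpha
    (y : @Pma R K eps alpha) : @Pma R L eps (f 0%N alpha) :=
  exist _ (C0_map f (proj1_sig y)) (Pm_pred_map f (proj2_sig y)).

Definition Pm_map (K L : precubical) (f : pc_hom K L) (x : Pm K eps) : Pm L eps :=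
  existT _ (f 0%N (projT1 x)) (Pma_map f (projT2 x)).

Lemma Pma_map_cont (K L : precubical) (f : pc_hom K L) (alpha : K 0%N) :
  cont (@Pma_top R K eps alpha) (@Pma_top R L eps (f 0%N alpha))
    (@Pma_map K L f alpha).
Proof.
apply: cont_kelley; apply: (cont_sub_top (h0 := C0_map f)) => //.
exact: C0_map_cont.
Qed.

Lemma Pm_map_cont (K L : precubical) (f : pc_hom K L) :
  cont (Pm_top K eps) (Pm_top L eps) (Pm_map f).
Proof. by move=> U TU alpha; exact: (Pma_map_cont (TU (f 0%N alpha))). Qed.

Lemma Pma_eq (K : precubical) alpha (y1 y2 : @Pma R K eps alpha) :
  proj1_sig (proj1_sig y1) = proj1_sig (proj1_sig y2) -> y1 = y2.
Proof.
by case: y1 y2 => [[h1 c1] p1] [[h2 c2] p2] /= E; do 2 apply: eq_exist.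
Qed.

Lemma Pm_map_id (K : precubical) (x : Pm K eps) : Pm_map (pc_id K) x = x.
Proof.
case: x => alpha y; congr (existT _ _ _).
by apply: Pma_eq; apply: funext => t; apply: gr_map_id.
Qed.

Lemma Pm_map_comp (K L M : precubical) (f : pc_hom K L) (g : pc_hom L M)
    (x : Pm K eps) :
  Pm_map (pc_comp g f) x = Pm_map g (Pm_map f x).
Proof.
case: x => alpha y; congr (existT _ _ _).
by apply: Pma_eq; apply: funext => t; apply: gr_map_comp.
Qed.

End BranchingMap.

Theorem proposition4p3 (R : realType) (eps : R) :
  0 < eps < 1 ->
  exists F : forall K L : precubical, pc_hom K L -> Pm K eps -> Pm L eps,
    (* each F f is a continuous map P^-(K,eps) -> P^-(L,eps) *)
    (forall (K L : precubical) (f : pc_hom K L),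
        cont (Pm_top K eps) (Pm_top L eps) (F K L f)) /\
    (* F f is the map induced by f: alpha |-> f_0 alpha, phi |-> |f|_geom o phi *)
    (forall (K L : precubical) (f : pc_hom K L) (x : Pm K eps),
        projT1 (F K L f x) = f 0%N (projT1 x) /\
        forall t : seg eps,
          proj1_sig (proj1_sig (projT2 (F K L f x))) t
          = gr_map f (proj1_sig (proj1_sig (projT2 x)) t)) /\
    (* functoriality *)
    (forall (K : precubical) (x : Pm K eps), F K K (pc_id K) x = x) /\
    (forall (K L M : precubical) (f : pc_hom K L) (g : pc_hom L M) (x : Pm K eps),
        F K M (pc_comp g f) x = F L M g (F K L f x)).
Proof.
move=> _; exists (fun K L f => @Pm_map R eps K L f).
split; first exact: Pm_map_cont.
split; first by [].
split; first exact: Pm_map_id.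
exact: Pm_map_comp.
Qed.
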